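(* Let $N\ge 2$, $\delta>0$, and let $a$ be a $C^2$ function on the ball $B'_\delta(0)\subset\mathbb{R}^{N-1}$ with $a(0)=0$, $\nabla a(0)=0$, and $a$ not identically zero on $B'_\delta(0)$. Let $(p_n)_n$ be a sequence in $\mathbb{R}^N$ such that for some constant $C$ and all $n$ and all $x'\in B'_\delta(0)$, $$|p_n\cdot(x',a(x'))|\le C.$$ Then $(p_n)_n$ is bounded. *)

From HB Require Import structures.
From mathcomp Require Import all_boot all_order all_algebra.
From mathcomp Require Import all_classical all_reals all_analysis.
Set Implicit Arguments. Unset Strict Implicit. Unset Printing Implicit Defensive.
Import Order.TTheory GRing.Theory Num.Theory.
Import numFieldNormedType.Exports.
Local Open Scope ring_scope.
Local Open Scope classical_set_scope.

Definition dotv (R : realType) (k : nat) (u v : 'rV[R]_k) : R :=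
  \sum_(i < k) u 0 i * v 0 i.

Definition sqnormv (R : realType) (k : nat) (u : 'rV[R]_k) : R := dotv u u.

Definition eball0 (R : realType) (k : nat) (delta : R) : set 'rV[R]_k :=
  [set x | sqnormv x < delta ^+ 2].

Definition ebasis (R : realType) (k : nat) (i : 'I_k) : 'rV[R]_k :=
  delta_mx 0 i.

Definition C2_on (R : realType) (k : nat) (f : 'rV[R]_k -> R) (U : set 'rV[R]_k) : Prop :=
  (forall x, U x -> differentiable f x) /\
  (forall (i : 'I_k) x, U x -> differentiable (fun y => derive f y (ebasis R i)) x) /\
  (forall (i j : 'I_k) x, U x ->
     {for x, continuous (fun y => derive (fun z => derive f z (ebasis R i)) y (ebasis R j))}).

Definition graphpt (R : realType) (k : nat) (a : 'rV[R]_k -> R) (x : 'rV[R]_k) : 'rV[R]_(k + 1) :=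
  row_mx x (\row_(j < 1) a x).

From HB Require Import structures.
From mathcomp Require Import all_boot all_order all_algebra.
From mathcomp Require Import all_classical all_reals all_analysis.
From mathcomp Require Import lra.
Set Implicit Arguments. Unset Strict Implicit. Unset Printing Implicit Defensive.
Import Order.TTheory GRing.Theory Num.Theory.
Import numFieldNormedType.Exports.
Local Open Scope ring_scope.
Local Open Scope classical_set_scope.

(* Write p = (p', s). Testing the bound at a point x0 with a(x0) <> 0 controls
   |s| by the size of p'. Testing it at the points h e_i on the coordinate axes,
   where |a(h e_i)| <= e |h| because grad a(0) = 0, controls |p'_i| by the size
   of e |s|. For e small enough the two estimates close up and bound both parts. *)

Lemma ler_sum_term (R : numDomainType) (I : finType) (F : I -> R) (i : I) :
  (forall j, 0 <= F j) -> F i <= \sum_j F j.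
Proof. by move=> F_ge0; rewrite (bigD1 i) //= lerDl sumr_ge0. Qed.

Lemma ler_norm_addl (R : numDomainType) (x y : R) : `|y| <= `|x + y| + `|x|.
Proof. by have := ler_normB (x + y) x; rewrite [x + y]addrC addrK. Qed.

Lemma ler_mul_norm (R : realDomainType) (x B : R) : `|x| <= B -> x * x <= B * B.
Proof.
move=> xB; rewrite -[x * x]expr2 -real_normK ?num_real // -expr2.
by rewrite lerXn2r ?nnegrE // (le_trans _ xB).
Qed.

Lemma flat_on_axes_near0 (R : realType) (m : nat) (a : 'rV[R]_m -> R) (e : R) :
  0 < e -> a 0 = 0 ->
  (forall i, derivable a 0 (ebasis R i)) ->
  (forall i, derive a 0 (ebasis R i) = 0) ->
  \forall h \near 0^', forall i, `|a (h *: ebasis R i)| <= e * `|h|.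
Proof.
move=> e_gt0 a0 a_der a_flat; apply: filter_forall => i.
have := a_der i; rewrite /derivable -/(derive a 0 (ebasis R i)) a_flat.
move=> /cvgrPdist_le /(_ e e_gt0); apply: filter_app; near=> h => /=.
have h_neq0 : h != 0 by near: h; exact: nbhs_dnbhs_neq.
rewrite add0r a0 subr0 addr0 normrN normrZ normfV.
by rewrite ler_pdivrMl ?normr_gt0 // mulrC.
Unshelve. all: by end_near.
Qed.

Lemma flat_on_axes (R : realType) (m : nat) (a : 'rV[R]_m -> R) (e delta : R) :
  0 < e -> 0 < delta -> a 0 = 0 ->
  (forall i, derivable a 0 (ebasis R i)) ->
  (forall i, derive a 0 (ebasis R i) = 0) ->
  exists h : R, [/\ h != 0, `|h| < delta &
                    forall i, `|a (h *: ebasis R i)| <= e * `|h|].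
Proof.
move=> e_gt0 delta_gt0 a0 a_der a_flat.
have small_h : \forall h \near (0 : R)^', `|h| < delta.
  apply: nbhs_dnbhs; apply/nbhs_ballP; exists delta => //= y.
  by rewrite /ball /= sub0r normrN.
have near_h : \forall h \near (0 : R)^', [/\ h != 0, `|h| < delta &
    forall i, `|a (h *: ebasis R i)| <= e * `|h|].
  near=> h; split.
  - by near: h; exact: nbhs_dnbhs_neq.
  - by near: h; exact: small_h.
  - by near: h; exact: flat_on_axes_near0.
exact: filter_ex near_h.
Unshelve. all: by end_near.
Qed.

Lemma eball0_center (R : realType) (m : nat) (delta : R) :
  0 < delta -> eball0 delta (0 : 'rV[R]_m).
Proof.
move=> delta_gt0; rewrite /eball0 /= /sqnormv /dotv big1 ?exprn_gt0 // => i _.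
by rewrite mxE mul0r.
Qed.

Lemma eball0_scale_ebasis (R : realType) (m : nat) (delta h : R) (i : 'I_m) :
  `|h| < delta -> eball0 delta (h *: ebasis R i).
Proof.
move=> h_lt; rewrite /eball0 /= /sqnormv /dotv (bigD1 i) //= big1 ?addr0.
  rewrite !mxE !eqxx mulr1 -expr2 -real_normK ?num_real //.
  by rewrite ltrXn2r ?nnegrE // (le_trans _ (ltW h_lt)).
by move=> j ji; rewrite !mxE (negbTE ji) andbF mulr0 mul0r.
Qed.

Lemma sum_mul_scale_ebasis (R : realType) (m : nat) (F : 'I_m -> R) (h : R) i :
  \sum_j F j * (h *: ebasis R i) 0 j = h * F i.
Proof.
rewrite (bigD1 i) //= big1 ?addr0; first by rewrite !mxE !eqxx mulr1 mulrC.
by move=> j ji; rewrite !mxE (negbTE ji) andbF mulr0 !mulr0.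
Qed.

Section GraphPairing.
Variables (R : realType) (m : nat).
Implicit Types (u : 'rV[R]_(m + 1)) (x : 'rV[R]_m).

Definition vcoord u : R := u 0 (rshift m ord0).
Definition hnorm1 u : R := \sum_i `|u 0 (lshift 1 i)|.

Lemma hnorm1_ge0 u : 0 <= hnorm1 u.
Proof. exact: sumr_ge0. Qed.

Lemma dotv_graphpt (a : 'rV[R]_m -> R) u x :
  dotv u (graphpt a x) = \sum_i u 0 (lshift 1 i) * x 0 i + vcoord u * a x.
Proof.
rewrite /dotv big_split_ord /= big_ord1 /graphpt row_mxEr mxE.
by congr (_ + _); apply: eq_bigr => i _; rewrite row_mxEl.
Qed.

Lemma sqnormv_le_coords u (B B' : R) :
  hnorm1 u <= B -> `|vcoord u| <= B' -> sqnormv u <= m%:R * (B * B) + B' * B'.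
Proof.
move=> hB vB'; rewrite /sqnormv /dotv big_split_ord /= big_ord1.
apply: lerD; last exact: ler_mul_norm.
have -> : m%:R * (B * B) = \sum_(i < m) B * B by rewrite sumr_const card_ord mulr_natl.
apply: ler_sum => i _.
by apply/ler_mul_norm/(le_trans _ hB)/ler_sum_term.
Qed.

Lemma vcoord_graph_bound (a : 'rV[R]_m -> R) u x :
  `|vcoord u| * `|a x| <= `|dotv u (graphpt a x)| + hnorm1 u * \sum_i `|x 0 i|.
Proof.
rewrite dotv_graphpt -normrM.
set L := \sum_i _; apply: le_trans (@ler_norm_addl R L _) _; apply: lerD => //.
apply: le_trans (ler_norm_sum _ _ _) _; rewrite mulr_suml.
apply: ler_sum => j _; rewrite normrM ler_wpM2l //.
by apply: ler_sum_term.
Qed.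

Lemma hcoord_axis_bound (a : 'rV[R]_m -> R) u (h : R) i :
  `|h| * `|u 0 (lshift 1 i)| <=
  `|dotv u (graphpt a (h *: ebasis R i))| + `|vcoord u| * `|a (h *: ebasis R i)|.
Proof.
rewrite dotv_graphpt sum_mul_scale_ebasis -!normrM.
by rewrite [_ + vcoord u * _]addrC ler_norm_addl.
Qed.

Lemma hnorm1_axes_bound (a : 'rV[R]_m -> R) u (h e C : R) :
  (forall i, `|dotv u (graphpt a (h *: ebasis R i))| <= C) ->
  (forall i, `|a (h *: ebasis R i)| <= e * `|h|) ->
  `|h| * hnorm1 u <= m%:R * C + m%:R * (e * `|h| * `|vcoord u|).
Proof.
move=> uC a_small; rewrite -mulrDr.
have -> : m%:R * (C + e * `|h| * `|vcoord u|) = \sum_(i < m) (C + e * `|h| * `|vcoord u|).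
  by rewrite sumr_const card_ord mulr_natl.
rewrite /hnorm1 mulr_sumr; apply: ler_sum => i _.
apply: le_trans (hcoord_axis_bound a u h i) _; apply: lerD => //.
by rewrite mulrC ler_wpM2r.
Qed.

End GraphPairing.

Lemma coupled_estimates_bound (R : realFieldType) (c C A K e H Q S : R) :
  0 < A -> 0 < H -> 0 <= c -> 0 <= e -> 0 <= Q ->
  c * e * K <= A / 2 ->
  S * A <= C + Q * K ->
  H * Q <= c * C + c * (e * H * S) ->
  Q <= 2 * c * C * (A + e * H) / (H * A).
Proof.
move=> A_gt0 H_gt0 c_ge0 e_ge0 Q_ge0 ceK SA HQ.
rewrite ler_pdivlMr ?mulr_gt0 //.
have HQA := ler_wpM2r (ltW A_gt0) HQ.
have ceH_SA := ler_wpM2l (mulr_ge0 (mulr_ge0 c_ge0 e_ge0) (ltW H_gt0)) SA.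
have HQ_ceK := ler_wpM2l (mulr_ge0 (ltW H_gt0) Q_ge0) ceK.
lra.
Qed.

Theorem proposition3p1 (R : realType) (m : nat) (hm : (1 <= m)%N) (delta : R)
  (hdelta : 0 < delta) (a : 'rV[R]_m -> R)
  (ha2 : C2_on a ((@eball0 R m delta)))
  (ha0 : a 0 = 0)
  (hgrad : forall i : 'I_m, derive a 0 (ebasis R i) = 0)
  (hnz : exists2 x, (@eball0 R m delta) x & a x <> 0)
  (p : nat -> 'rV[R]_(m + 1))
  (hp : exists C : R, forall n x, (@eball0 R m delta) x -> `| dotv (p n) (graphpt a x) | <= C) :
  exists M : R, forall n, sqnormv (p n) <= M.
Proof.
have a_der i : derivable a 0 (ebasis R i).
  by apply/diff_derivable/ha2.1; exact: eball0_center.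
case: hnz => x0 x0_ball ax0_neq0; case: hp => C hC.
set A := `|a x0|; set K := \sum_j `|x0 0 j|.
have A_gt0 : 0 < A by rewrite normr_gt0; apply/eqP.
have K_ge0 : 0 <= K by exact: sumr_ge0.
have den_gt0 : 0 < 2 * (m%:R * K + 1) :> R by rewrite mulr_gt0 // ltr_wpDl ?mulr_ge0.
set e := A / (2 * (m%:R * K + 1)).
have e_gt0 : 0 < e by exact: divr_gt0.
have meK : m%:R * e * K <= A / 2.
  have : e * (2 * (m%:R * K + 1)) = A by rewrite mulfVK ?gt_eqF.
  have : 0 <= m%:R :> R by []. lra.
have [h [h_neq0 h_lt a_axes]] := flat_on_axes e_gt0 hdelta ha0 a_der hgrad.
have h_gt0 : 0 < `|h| by rewrite normr_gt0.
set Qb := 2 * m%:R * C * (A + e * `|h|) / (`|h| * A).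
have hnorm1_le n : hnorm1 (p n) <= Qb.
  apply: coupled_estimates_bound (ltW e_gt0) (hnorm1_ge0 _) meK _ _ => //.
  - apply: le_trans (vcoord_graph_bound a (p n) x0) _.
    by rewrite lerD2r hC.
  - apply: hnorm1_axes_bound a_axes => i.
    exact/hC/eball0_scale_ebasis.
exists (m%:R * (Qb * Qb) + (C + Qb * K) / A * ((C + Qb * K) / A)) => n.
apply: sqnormv_le_coords (hnorm1_le n) _.
rewrite ler_pdivlMr //; apply: le_trans (vcoord_graph_bound a (p n) x0) _.
by rewrite lerD ?hC ?ler_wpM2r.
Qed.
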